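(* Let $\mathbf{B}$ be a binomial ring and $n\ge0$. The Ariadne functor $A_n\colon\mathfrak{Laby}\to\mathfrak{MSet}_n$ factors through the quotient category $\mathfrak{Laby}_n$, producing a functor $A_n\colon\mathfrak{Laby}_n\to\mathfrak{MSet}_n$.
   Context: Binomial ring: commutative unital, torsion-free as an abelian group, with $\binom ak=a(a-1)\cdots(a-k+1)/k!\in\mathbf{B}$ for all $a\in\mathbf{B}$, $k\ge0$. Multi-sets, multations, $\mathfrak{MSet}_n$: a multi-set is a finite set with positive integer multiplicities, $|A|$ the sum of multiplicities. A multation $\mu\colon A\to B$ ($|A|=|B|=n$) is a multi-set of pairs with first-coordinate multi-set $A$ and second-coordinate multi-set $B$. $\mathfrak{MSet}_n$ has objects formal direct sums of multi-sets of cardinality $n$, morphisms the free $\mathbf{B}$-modules on multations, composition $\mu\circ\nu=\sum_K\frac{\prod_{(a,c)}m_{K_{13}}(a,c)!}{\prod m_K(a,b,c)!}K_{13}$ over multi-sets of triples $K$ with $(1,2)$-projection $\nu$ and $(2,3)$-projection $\mu$. $\prod_j[a_j;b_j]^{[m_j]}$ (distinct pairs) is the multation with $(a_j,b_j)$ of multiplicity $m_j$, with $[a;b]^{[i]}[a;b]^{[j]}=\binom{i+j}i[a;b]^{[i+j]}$. Mazes, $\mathfrak{Laby}$: a passage $p\colon x\to y$ carries label $\overline p\in\mathbf{B}$; a maze $P\colon X\to Y$ between finite sets is a finite multi-set of passages with every element of $X$ a source and of $Y$ a target; $|P|$ is its number of passages with multiplicity. $\mathfrak{Laby}$: objects formal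 finite direct sums of finite sets; morphisms generated by mazes modulo $P\cup\{x\xrightarrow0y\}=0$ and $P\cup\{x\xrightarrow{a+b}y\}=P\cup\{x\xrightarrow ay\}+P\cup\{x\xrightarrow by\}+P\cup\{x\xrightarrow ay,x\xrightarrow by\}$; composition $P\circ Q=\sum_{U\sqsubseteq P\boxtimes Q}U$ ($U$ a sub-multi-set of composable pairs using every passage occurrence of $P$ and $Q$, read as the maze with passages $x\xrightarrow{\overline p\overline q}z$). $\mathfrak{Laby}_n$ is the quotient of $\mathfrak{Laby}$ by (III) $P=0$ whenever $|P|>n$ and (IV) $P=\sum_d\prod_p\binom{\overline p}{d_p}I_d$, $d$ ranging over assignments of integers $d_p\ge1$ to the passage occurrences $p$ of $P$, $I_d$ the maze with $d_p$ passages from the source to the target of $p$ labelled $1$. Ariadne functor: $A_n(X)=\bigoplus_AA$ over multi-sets $A$ with support exactly $X$ and $|A|=n$; for a maze $P$ with passage occurrences $p\colon x_p\to y_p$, $A_n(P)=\sum_d\prod_p\overline p^{\,d_p}[x_p;y_p]^{[d_p]}$ over $d_p\ge1$ with $\sum d_p=n$. *)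

From HB Require Import structures.
From mathcomp Require Import all_boot all_order all_algebra.
Set Implicit Arguments. Unset Strict Implicit. Unset Printing Implicit Defensive.
Import Order.TTheory GRing.Theory.
Local Open Scope ring_scope.

Definition torsion_free (R : comPzRingType) : Prop :=
  forall (x : R) (k : nat), x *+ k.+1 = 0 -> x = 0.

(* [bn a k] is the binomial coefficient  a(a-1)...(a-k+1)/k!  in R:
   k! * bn a k = a(a-1)...(a-k+1).  In a torsion-free ring it is unique. *)
Definition binomial_fun (R : comPzRingType) (bn : R -> nat -> R) : Prop :=
  forall (a : R) (k : nat), bn a k *+ k`! = \prod_(i < k) (a - i%:R).

(* A multation between multi-sets over X and Y is a multi-set of pairs,
   i.e. a multiplicity function on X * Y (source/target multi-sets are its
   two projections). *)
Definition multation (X Y : finType) := {ffun X * Y -> nat}.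

(* Product of divided powers  prod_j [a_j; b_j]^[d_j]  following the rule
   [a;b]^[i] [a;b]^[j] = C(i+j, i) [a;b]^[i+j]  (pairs for distinct (a,b)
   just multiply into the multation with the union of pairs). *)
Definition dpow_step (X Y : finType) (e : X * Y * nat)
    (cm : nat * multation X Y) : nat * multation X Y :=
  let: (xy, d) := e in
  let: (c, M) := cm in
  (c * 'C(M xy + d, d), [ffun z => M z + (if z == xy then d else 0)]).

Definition dpow_prod (X Y : finType) (s : seq (X * Y * nat))
    : nat * multation X Y :=
  foldr (@dpow_step X Y) (1, [ffun => 0]) s.

(* A maze X -> Y is a finite multi-set of passages (x, y, label); we list its
   passage occurrences. *)
Definition maze (X Y : finType) (R : Type) := seq (X * Y * R).

Definition is_maze (X Y : finType) (R : Type) (P : maze X Y R) : Prop :=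
  (forall x : X, x \in map (fun q => q.1.1) P) /\
  (forall y : Y, y \in map (fun q => q.1.2) P).

Definition pass (X Y : finType) (R : Type) (P : maze X Y R) (p : 'I_(size P)) :
    X * Y * R := tnth (in_tuple P) p.

Definition pend (X Y : finType) (R : Type) (P : maze X Y R) (p : 'I_(size P)) : X * Y :=
  (pass p).1.
Definition plab (X Y : finType) (R : Type) (P : maze X Y R) (p : 'I_(size P)) : R :=
  (pass p).2.

Definition assign (X Y : finType) (R : Type) (P : maze X Y R) (n : nat) :=
  {ffun 'I_(size P) -> 'I_n.+1}.

Definition pos_assign (X Y : finType) (R : Type) (P : maze X Y R) (n : nat)
   (d : assign P n) : bool := [forall p, (0 < d p)%N].

(* A_n(P) = sum_{d_p >= 1, sum d_p = n} prod_p lab_p^{d_p} [x_p;y_p]^[d_p],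
   given as its coefficient function on multations. *)
Definition Ariadne (R : comPzRingType) (n : nat) (X Y : finType)
    (P : maze X Y R) (M : multation X Y) : R :=
  \sum_(d : assign P n | pos_assign d && (\sum_p (d p : nat) == n)%N)
     (\prod_p plab p ^+ d p) *
     (let cm := dpow_prod [seq (pend p, (d p : nat)) | p <- enum 'I_(size P)] in
      if cm.2 == M then (cm.1)%:R else 0).

Definition Imaze (R : comPzRingType) (X Y : finType) (P : maze X Y R) (n : nat)
    (d : assign P n) : maze X Y R :=
  flatten [seq nseq (d p) (pend p, 1) | p <- enum 'I_(size P)].

(* Expand the divided-power product defining A_n(P) one passage at a time.
   A passage x --a--> y with exponent k >= 1 contributes a^k 'C(M(x,y), k),
   whereas the d parallel passages labelled 1 that replace it in I_d
   contribute surj(k, d) 'C(M(x,y), k), with surj(k, d) the number of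
   surjections from a k-set onto a d-set.  Relation (IV) therefore reduces,
   passage by passage, to the identity a^k = sum_(d >= 1) binom(a, d) surj(k, d),
   which holds in a torsion-free binomial ring since it follows by induction on
   k from a binom(a, d) = (d+1) binom(a, d+1) + d binom(a, d).  Relation (III)
   holds because more than n exponents d_p >= 1 cannot sum to n. *)

From mathcomp Require Import all_boot all_order all_algebra.
From mathcomp Require Import zify ring.
Import GRing.Theory.
Set Implicit Arguments. Unset Strict Implicit. Unset Printing Implicit Defensive.
Local Open Scope ring_scope.

(* [surj m d] is the number of surjections from an [m]-set onto a [d]-set:
   choose the [j >= 1] points sent to the last point of the target. *)
Fixpoint surj (m d : nat) : nat :=
  if d is d'.+1 then (\sum_(1 <= j < m.+1) 'C(m, j) * surj (m - j) d')%N
  else (m == 0)%N.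

Lemma surjS m d : surj m d.+1 = (\sum_(1 <= j < m.+1) 'C(m, j) * surj (m - j) d)%N.
Proof. by []. Qed.

Lemma surj_small m d : (m < d)%N -> surj m d = 0%N.
Proof.
elim: d m => [|d IH] m //= lt_md.
rewrite big_nat_cond big1 // => j /andP[/andP[j_gt0 lt_jm] _].
by rewrite IH ?muln0 //; lia.
Qed.

Lemma surjS_shift m d :
  surj m d.+1 = (\sum_(0 <= i < m) 'C(m, i.+1) * surj (m - i.+1) d)%N.
Proof. exact: big_add1. Qed.

Lemma surjSl m d : surj m.+1 d = (d * (surj m d + surj m d.-1))%N.
Proof.
elim: d m => [|d IH] m //.
rewrite surjS_shift.
under eq_bigr => i _ do rewrite subSS binS mulnDl.
rewrite big_split /= [X in (_ + X)%N]big_nat_recl // bin0 mul1n subn0 -surjS_shift.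
rewrite [X in (X + _)%N]big_nat_recr //= bin_small // mul0n addn0 -surjS.
have -> : (\sum_(0 <= i < m) 'C(m, i.+1) * surj (m - i) d =
   d * (surj m d.+1 + \sum_(0 <= i < m) 'C(m, i.+1) * surj (m - i.+1) d.-1))%N.
  rewrite surjS_shift mulnDr !big_distrr /= -big_split /=.
  rewrite big_nat_cond [RHS]big_nat_cond.
  apply: eq_bigr => i /andP[/andP[_ lt_im] _].
  have -> : (m - i = (m - i.+1).+1)%N by lia.
  by rewrite IH mulnDr mulnDr !mulnA (mulnC 'C(m, i.+1)).
case: d IH => [|d] IH; first by rewrite mul0n mul1n add0n addnC.
rewrite -[d.+1.-1]/d -surjS_shift; lia.
Qed.

Lemma mul_bin_sub c j k : ('C(c, j) * 'C(c - j, k) = 'C(c, j + k) * 'C(j + k, j))%N.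
Proof.
have [le_jkc|lt_cjk] := leqP (j + k) c; last first.
  rewrite [in RHS]bin_small //.
  have [le_jc|lt_cj] := leqP j c; last by rewrite bin_small.
  by rewrite [in LHS](@bin_small (c - j)) ?muln0 //; lia.
apply/eqP; rewrite -(eqn_pmul2r (fact_gt0 j)) -(eqn_pmul2r (fact_gt0 k)).
rewrite -(eqn_pmul2r (fact_gt0 (c - j - k))); apply/eqP.
have Ej := bin_fact (_ : (j <= c)%N); have Ek := bin_fact (_ : (k <= c - j)%N).
have Ejk := bin_fact le_jkc; have Ej_jk := bin_fact (leq_addr k j).
have -> : ('C(c, j) * 'C(c - j, k) * j`! * k`! * (c - j - k)`! =
   'C(c, j) * (j`! * ('C(c - j, k) * (k`! * (c - j - k)`!))))%N by ring.
rewrite Ek ?Ej; [|lia|lia].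
have -> : ('C(c, j + k) * 'C(j + k, j) * j`! * k`! * (c - j - k)`! =
   'C(c, j + k) * ('C(j + k, j) * (j`! * (j + k - j)`!)) * (c - (j + k))`!)%N.
  by rewrite addKn -subnDA; ring.
by rewrite Ej_jk -mulnA Ejk.
Qed.

Lemma sum_surj_convolution (R : comPzRingType) (G : nat -> R) n c d : (c <= n)%N ->
  \sum_(j < n.+1 | (0 < j)%N) 'C(c, j)%:R *
     \sum_(k < n.+1) (surj k d)%:R * 'C(c - j, k)%:R * G (j + k)%N
  = \sum_(m < n.+1) (surj m d.+1)%:R * 'C(c, m)%:R * G m.
Proof.
move=> le_cn.
pose F j m : R := ('C(c, m) * 'C(m, j) * surj (m - j) d)%:R * G m.
have shift (j : 'I_n.+1) : 'C(c, j)%:R *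
    \sum_(k < n.+1) (surj k d)%:R * 'C(c - j, k)%:R * G (j + k)%N
    = \sum_(m < n.+1 | (j <= m)%N) F j m.
  transitivity (\sum_(k < n.+1) F j (k + j)%N).
    rewrite big_distrr /=; apply: eq_bigr => k _.
    by rewrite /F addnK [(k + j)%N]addnC -mul_bin_sub !natrM; ring.
  rewrite -(big_mkord (fun=> true) (fun k => F j (k + j)%N)).
  rewrite (big_cat_nat _ (leq_subr j n.+1)) //=.
  rewrite [X in _ + X]big_nat_cond [X in _ + X]big1 ?addr0; last first.
    move=> k /andP[/andP[le_k _] _].
    by rewrite /F bin_small ?mul0n ?mul0r //; have := ltn_ord j; lia.
  by rewrite -(big_addn 0 n.+1 j xpredT (F j)) (big_geq_mkord j n.+1 xpredT).
rewrite (eq_bigr _ (fun j _ => shift j)) (exchange_big_dep xpredT) //=.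
apply: eq_bigr => m _.
rewrite natr_sum (big_nat_widen _ _ _ _ _ (ltn_ord m)) big_geq_mkord !big_distrl /=.
by apply: eq_big => [j|j _]; [rewrite andbC | rewrite /F !natrM; ring].
Qed.

Section BinomialRing.
Variables (R : comPzRingType) (bn : R -> nat -> R).
Hypotheses (tfR : torsion_free R) (bnE : binomial_fun bn).

Lemma binomial_fun0 a : bn a 0 = 1.
Proof. by have := bnE a 0; rewrite big_ord0 mulr1n. Qed.

Lemma torsion_free_mulr_natr (x : R) k : (0 < k)%N -> x * k%:R = 0 -> x = 0.
Proof. by case: k => // k _; rewrite mulr_natr => /tfR. Qed.

(* Multiplied by (d+1)!, this is the falling-factorial identity
   a(a-1)...(a-d) = a(a-1)...(a-d+1) * (a - d). *)
Lemma mulr_binomial_fun a d : a * bn a d = bn a d.+1 * d.+1%:R + bn a d * d%:R.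
Proof.
apply/eqP; rewrite -subr_eq0; apply/eqP.
apply: (@torsion_free_mulr_natr _ (d.+1)`!); first exact: fact_gt0.
have Ed := bnE a d; have EdS := bnE a d.+1.
rewrite -mulr_natr in Ed; rewrite -mulr_natr big_ord_recr /= -Ed in EdS.
rewrite factS natrM.
transitivity (a * (bn a d * d`!%:R) * d.+1%:R - bn a d.+1 * (d.+1%:R * d`!%:R) * d.+1%:R
    - (bn a d * d`!%:R) * d%:R * d.+1%:R); first ring.
rewrite -natrM -factS EdS; ring.
Qed.

(* Counting maps from an m-set by the size d of their image. *)
Lemma sum_binomial_surj a N m : (m <= N)%N ->
  \sum_(d < N.+1) bn a d * (surj m d)%:R = a ^+ m.
Proof.
elim: m => [|m IH] le_mN.
  rewrite big_ord_recl /= binomial_fun0 mulr1 big1 ?addr0 // => i _.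
  by rewrite big_geq // mulr0.
have splitS d : bn a d * (surj m.+1 d)%:R =
    bn a d * (d%:R * (surj m d)%:R) + bn a d * (d%:R * (surj m d.-1)%:R).
  by rewrite surjSl natrM natrD; ring.
under eq_bigr => d _ do rewrite splitS.
rewrite big_split /= [X in _ + X]big_ord_recl /= mul0r mulr0 add0r.
have -> : \sum_(i < N)
      bn a (lift ord0 i) * ((lift ord0 i)%:R * (surj m (lift ord0 i).-1)%:R)
    = \sum_(i < N.+1) bn a i.+1 * (i.+1%:R * (surj m i)%:R).
  by rewrite big_ord_recr /= surj_small ?mulr0 ?addr0.
rewrite -big_split /= exprS -(IH (ltnW le_mN)) big_distrr /=.
by apply: eq_bigr => i _; rewrite [RHS]mulrA mulr_binomial_fun; ring.
Qed.

Lemma sum_binomial_surj_pos a N k : (0 < k)%N -> (k <= N)%N ->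
  \sum_(d < N.+1 | (0 < d)%N) bn a d * (surj k d)%:R = a ^+ k.
Proof.
move=> k_gt0 le_kN; rewrite -(sum_binomial_surj a le_kN) big_mkcond !big_ord_recl /=.
by case: k k_gt0 le_kN => // k _ _; rewrite mulr0 !add0r.
Qed.

End BinomialRing.

Section FinfunCons.
Variable A : finType.

Definition ffcons k (a : A) (d : {ffun 'I_k -> A}) : {ffun 'I_k.+1 -> A} :=
  [ffun i => if unlift ord0 i is Some j then d j else a].

Lemma ffcons0 k a (d : {ffun 'I_k -> A}) : ffcons a d ord0 = a.
Proof. by rewrite ffunE unlift_none. Qed.

Lemma ffconsS k a (d : {ffun 'I_k -> A}) j : ffcons a d (lift ord0 j) = d j.
Proof. by rewrite ffunE liftK. Qed.

Lemma big_ffun0 (R : nmodType) (F : {ffun 'I_0 -> A} -> R) d0 : \sum_d F d = F d0.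
Proof.
rewrite (eq_bigl (pred1 d0)) ?big_pred1_eq // => d /=.
by symmetry; apply/eqP/ffunP => -[].
Qed.

Lemma big_ffunS (R : nmodType) k (F : {ffun 'I_k.+1 -> A} -> R) :
  \sum_d F d = \sum_(a : A) \sum_(d : {ffun 'I_k -> A}) F (ffcons a d).
Proof.
rewrite pair_big /= (reindex (fun ad : A * {ffun 'I_k -> A} => ffcons ad.1 ad.2)) //=.
apply: onW_bij.
exists (fun d : {ffun 'I_k.+1 -> A} => (d ord0, [ffun j => d (lift ord0 j)])).
  move=> [a d] /=; rewrite ffcons0; congr pair.
  by apply/ffunP => j; rewrite ffunE ffconsS.
move=> d; apply/ffunP => i; rewrite ffunE /=.
by case: unliftP => [j|] ->; rewrite ?ffunE.
Qed.

End FinfunCons.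

Section MazeCons.
Variables (X Y : finType) (T : Type) (t : X * Y * T) (s : maze X Y T).

Lemma pass0 : @pass _ _ _ (t :: s) ord0 = t.
Proof. by rewrite /pass (tnth_nth t). Qed.

Lemma passS j : @pass _ _ _ (t :: s) (lift ord0 j) = pass j.
Proof. by rewrite /pass !(tnth_nth t). Qed.

Lemma plab0 : @plab _ _ _ (t :: s) ord0 = t.2.
Proof. by rewrite /plab pass0. Qed.

Lemma plabS j : @plab _ _ _ (t :: s) (lift ord0 j) = plab j.
Proof. by rewrite /plab passS. Qed.

Lemma pos_assign_cons n (a : 'I_n.+1) (d : assign s n) :
  @pos_assign _ _ _ (t :: s) n (ffcons a d) = (0 < a)%N && pos_assign d.
Proof.
apply/forallP/andP => [pos_ad|[a_gt0 /forallP pos_d] p].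
  split; first by have := pos_ad ord0; rewrite ffcons0.
  by apply/forallP => j; have := pos_ad (lift ord0 j); rewrite ffconsS.
by rewrite ffunE; case: unliftP => [j|] _.
Qed.

Lemma map_pend_cons n (a : 'I_n.+1) (d : assign s n) :
  [seq (@pend _ _ _ (t :: s) p, (ffcons a d p : nat)) | p <- enum 'I_(size s).+1] =
  (t.1, (a : nat)) :: [seq (pend p, (d p : nat)) | p <- enum 'I_(size s)].
Proof.
rewrite enum_ordSl /= /pend pass0 ffcons0; congr cons.
by rewrite -map_comp; apply: eq_map => j /=; rewrite passS ffconsS.
Qed.

Lemma prod_plab_cons (R : comPzRingType) n (a : 'I_n.+1) (d : assign s n)
    (F : T -> nat -> R) :
  \prod_(i < size s) F (@plab _ _ _ (t :: s) (lift ord0 i)) (ffcons a d (lift ord0 i))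
  = \prod_(i < size s) F (plab i) (d i).
Proof. by apply: eq_bigr => i _; rewrite plabS ffconsS. Qed.

Lemma sum_pos_assign_cons (R : nmodType) n (F : assign (t :: s) n -> R) :
  \sum_(d | pos_assign d) F d =
  \sum_(a < n.+1 | (0 < a)%N) \sum_(d : assign s n | pos_assign d) F (ffcons a d).
Proof.
rewrite big_mkcond big_ffunS [RHS]big_mkcond; apply: eq_bigr => a _.
under eq_bigr => d _ do rewrite pos_assign_cons.
case: posnP => _; [by rewrite big1 | by rewrite [RHS]big_mkcond].
Qed.

End MazeCons.

Section Multations.
Variables X Y : finType.
Implicit Types (M : multation X Y) (xy : X * Y).

(* The subtraction is truncated; it is only used where 'C(M xy, k) vanishes
   whenever [k > M xy]. *)
Definition msub M xy k : multation X Y :=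
  [ffun z => (M z - (if z == xy then k else 0))%N].

Lemma msub0 M xy : msub M xy 0 = M.
Proof. by apply/ffunP => z; rewrite ffunE; case: ifP; rewrite subn0. Qed.

Lemma msubE M xy k : msub M xy k xy = (M xy - k)%N.
Proof. by rewrite ffunE eqxx. Qed.

Lemma msubD M xy j k : msub (msub M xy j) xy k = msub M xy (j + k).
Proof. by apply/ffunP => z; rewrite !ffunE; case: ifP; rewrite ?subnDA ?subn0. Qed.

Lemma msub_bounded M xy k n :
  (forall z, (M z <= n)%N) -> forall z, (msub M xy k z <= n)%N.
Proof. by move=> leMn z; rewrite ffunE; apply: leq_trans (leq_subr _ _) (leMn z). Qed.

Lemma dpow_step_coef (R : pzSemiRingType) M M' xy c a :
  (if [ffun z => (M' z + (if z == xy then a else 0))%N] == M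
   then (c * 'C(M' xy + a, a))%:R else 0 :> R)
  = 'C(M xy, a)%:R * (if M' == msub M xy a then c%:R else 0).
Proof.
case: eqP => [<-|neqM].
  have -> : M' == msub [ffun z => (M' z + (if z == xy then a else 0))%N] xy a.
    by apply/eqP/ffunP => z; rewrite !ffunE addnK.
  by rewrite ffunE eqxx mulnC natrM.
case: eqP => [defM'|]; last by rewrite mulr0.
have [le_aM|lt_Ma] := leqP a (M xy); last by rewrite bin_small ?mul0r.
case: neqM; apply/ffunP => z; rewrite !ffunE defM' ffunE.
by case: eqP => [->|]; rewrite ?subnK // subn0 addn0.
Qed.

Lemma sum_dpow_prod (l : seq (X * Y * nat)) :
  (\sum_z (dpow_prod l).2 z = sumn (map snd l))%N.
Proof.
elim: l => [|[xy d] l IH] /=; first by rewrite big1 // => z _; rewrite ffunE.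
rewrite /dpow_step; case: (dpow_prod l) IH => c M' /= IH.
under eq_bigr => z _ do rewrite ffunE.
by rewrite big_split /= IH -big_mkcond big_pred1_eq addnC.
Qed.

End Multations.

Section AriadneExpansion.
Variables (R : comPzRingType) (X Y : finType) (n : nat).
Implicit Types (P s : maze X Y R) (M : multation X Y).

Definition Ariadne_free P M : R :=
  \sum_(d : assign P n | pos_assign d)
     (\prod_p plab p ^+ d p) *
     (let cm := dpow_prod [seq (pend p, (d p : nat)) | p <- enum 'I_(size P)] in
      if cm.2 == M then (cm.1)%:R else 0).

Fixpoint Ariadne_rec s M : R :=
  if s is t :: s' then
    \sum_(k < n.+1 | (0 < k)%N) t.2 ^+ k * 'C(M t.1, k)%:R * Ariadne_rec s' (msub M t.1 k)
  else (M == [ffun => 0%N])%:R.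

Lemma assign_nil_pos (d : assign ([::] : maze X Y R) n) : pos_assign d.
Proof. by apply/forallP => -[]. Qed.

Lemma Ariadne_free_rec s M : Ariadne_free s M = Ariadne_rec s M.
Proof.
elim: s M => [|t s IH] M.
  rewrite /Ariadne_free big_mkcond (big_ffun0 _ [ffun => ord0]) assign_nil_pos.
  by rewrite big_ord0 mul1r enum_ord0 /= eq_sym; case: (M == _).
rewrite /Ariadne_free sum_pos_assign_cons /=; apply: eq_bigr => a _.
rewrite -IH /Ariadne_free big_distrr; apply: eq_bigr => d _ /=.
rewrite big_ord_recl plab0 ffcons0 prod_plab_cons map_pend_cons /=.
case: (dpow_prod _) => c M' /=.
by rewrite dpow_step_coef -!mulrA; congr (_ * _); rewrite mulrCA.
Qed.

Lemma Ariadne_free_degree P M :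
  Ariadne n P M = ((\sum_z M z)%N == n)%:R * Ariadne_free P M.
Proof.
rewrite /Ariadne /Ariadne_free big_mkcondr big_distrr; apply: eq_bigr => d _ /=.
set cm := dpow_prod _; have [defM|] := eqVneq cm.2 M; last by rewrite !mulr0 if_same.
rewrite -defM sum_dpow_prod -map_comp sumnE big_map big_enum /=.
by case: ifP; rewrite ?mul1r ?mul0r.
Qed.

Lemma Ariadne_size_gt P M : (n < size P)%N -> Ariadne n P M = 0.
Proof.
move=> lt_nP; rewrite /Ariadne big1 // => d /andP[/forallP pos_d /eqP sum_d].
suff : (size P <= \sum_p (d p : nat))%N by rewrite sum_d leqNgt lt_nP.
by rewrite -[X in (X <= _)%N]card_ord -sum1_card; apply: leq_sum => p _; apply: pos_d.
Qed.

Lemma size_Imaze P (d : assign P n) : size (Imaze d) = (\sum_p (d p : nat))%N.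
Proof.
rewrite /Imaze size_flatten /shape -map_comp sumnE big_map big_enum.
by apply: eq_bigr => p _; rewrite /= size_nseq.
Qed.

Lemma Imaze_cons t s (a : 'I_n.+1) (d : assign s n) :
  @Imaze _ _ _ (t :: s) n (ffcons a d) = nseq a (t.1, 1) ++ Imaze d.
Proof.
rewrite /Imaze enum_ordSl /= /pend pass0 ffcons0; congr (_ ++ _).
by rewrite -map_comp; congr flatten; apply: eq_map => j /=; rewrite passS ffconsS.
Qed.

Lemma Ariadne_rec_nseq d (xy : X * Y) s M : (forall z, (M z <= n)%N) ->
  Ariadne_rec (nseq d (xy, 1) ++ s) M =
  \sum_(k < n.+1) (surj k d)%:R * 'C(M xy, k)%:R * Ariadne_rec s (msub M xy k).
Proof.
elim: d M => [|d IH] M leMn /=.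
  rewrite big_ord_recl /= msub0 bin0 !mul1r big1 ?addr0 // => i _.
  by rewrite !mul0r.
under eq_bigr => j _ do rewrite expr1n mul1r (IH _ (msub_bounded _ _ leMn)) msubE.
under eq_bigr => j _ do under eq_bigr => k _ do rewrite msubD.
exact: (sum_surj_convolution (fun m => Ariadne_rec s (msub M xy m)) _ (leMn xy)).
Qed.

Variable bn : R -> nat -> R.
Hypotheses (tfR : torsion_free R) (bnE : binomial_fun bn).

Lemma Ariadne_rec_Imaze s M : (forall z, (M z <= n)%N) ->
  Ariadne_rec s M = \sum_(d : assign s n | pos_assign d)
     (\prod_p bn (plab p) (d p)) * Ariadne_rec (Imaze d) M.
Proof.
elim: s M => [|t s IH] M leMn.
  rewrite big_mkcond (big_ffun0 _ [ffun => ord0]) assign_nil_pos.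
  by rewrite big_ord0 mul1r /Imaze enum_ord0.
rewrite sum_pos_assign_cons.
under eq_bigr => a _ do under eq_bigr => d _ do rewrite big_ord_recl plab0 ffcons0
  prod_plab_cons Imaze_cons (Ariadne_rec_nseq _ _ _ leMn) big_distrr.
under eq_bigr => a _ do rewrite exchange_big.
rewrite exchange_big /= big_mkcond; apply: eq_bigr => k _.
case: posnP => [k0 | k_gt0].
  rewrite big1 // => a a_gt0; rewrite big1 // => d _.
  by rewrite k0 surj_small // !mul0r mulr0.
have le_kn : (k <= n)%N by rewrite -ltnS.
rewrite (IH _ (msub_bounded _ _ leMn)) -(sum_binomial_surj_pos tfR bnE t.2 k_gt0 le_kn).
rewrite !big_distrl /=; apply: eq_bigr => a _.
rewrite big_distrr /=; apply: eq_bigr => d _; ring.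
Qed.

End AriadneExpansion.

Theorem mainTheorem9 (R : comPzRingType) (bn : R -> nat -> R)
    (Htf : torsion_free R) (Hbn : binomial_fun bn) (n : nat) (X Y : finType) :
  (forall P : maze X Y R, is_maze P -> (n < size P)%N ->
     forall M : multation X Y, Ariadne n P M = 0) /\
  (forall P : maze X Y R, is_maze P ->
     forall M : multation X Y,
       Ariadne n P M =
       \sum_(d : assign P n | pos_assign d && (\sum_p (d p : nat) <= n)%N)
          (\prod_p bn (plab p) (d p)) * Ariadne n (Imaze d) M).
Proof.
split=> [P _ lt_nP M | P _ M]; first exact: Ariadne_size_gt.
transitivity (\sum_(d : assign P n | pos_assign d)
    (\prod_p bn (plab p) (d p)) * Ariadne n (Imaze d) M); last first.
  rewrite big_mkcondr; apply: eq_bigr => d _; case: leqP => // lt_nd.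
  by rewrite Ariadne_size_gt ?mulr0 ?size_Imaze.
under eq_bigr => d _ do rewrite Ariadne_free_degree Ariadne_free_rec.
rewrite Ariadne_free_degree Ariadne_free_rec.
case: eqP => [degM | _]; last by rewrite mul0r big1 // => d _; rewrite mul0r mulr0.
under eq_bigr => d _ do rewrite mul1r.
rewrite mul1r; apply: Ariadne_rec_Imaze => // z.
by rewrite -degM (bigD1 z) //= leq_addr.
Qed.
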